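(* Let $X$ be a set and let $R$ be a topology expander over $X$. Then the least fixed point $\mu\tau.\,R(\tau)$ of $R$ (which exists since the topologies on $X$ form a complete lattice under inclusion and $R$ is monotone) is a Noetherian topology on $X$.
   Context: A topological space is Noetherian if every subset is compact; equivalently, every increasing sequence $(U_i)_{i\in\mathbb N}$ of open sets satisfies $\bigcup_{i\in\mathbb N}U_i=\bigcup_{i\le j}U_i$ for some $j$. A topology $\tau$ is Noetherian if $(X,\tau)$ is. A refinement function over a set $X$ is a map $R$ from topologies on $X$ to topologies on $X$ such that (i) $\tau\subseteq\tau'$ implies $R(\tau)\subseteq R(\tau')$, and (ii) $R(\tau)$ is Noetherian whenever $\tau$ is. For a topology $\tau$ on $X$ and a subset $H\subseteq X$ (typically closed), the subset restriction $\tau|_H$ is the topology on $X$ generated by the sets $U\cap H$ for $U\in\tau$. A topology expander is a refinement function $R$ such that for every Noetherian topology $\tau$ with $\tau\subseteq R(\tau)$ and every set $H$ closed in $\tau$, one has $R(\tau)|_H = R(\tau|_H)|_H$. *)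

From Stdlib Require Import List.

Set Implicit Arguments.

Section Topo.
Variable X : Type.

Definition set := X -> Prop.
Definition family := set -> Prop.

Definition subset (A B : set) : Prop := forall x, A x -> B x.
Definition fsubset (F G : family) : Prop := forall U, F U -> G U.
Definition feq (F G : family) : Prop := fsubset F G /\ fsubset G F.

Definition bigunion (F : family) : set := fun x => exists U, F U /\ U x.
Definition setI (A B : set) : set := fun x => A x /\ B x.
Definition setT : set := fun _ => True.

Definition is_topology (tau : family) : Prop :=
  tau setT /\
  (forall U V, tau U -> tau V -> tau (setI U V)) /\
  (forall F, fsubset F tau -> tau (bigunion F)).

Definition is_closed (tau : family) (H : set) : Prop :=
  tau (fun x => ~ H x).

Definition compact_in (tau : family) (S : set) : Prop :=
  forall F : family, fsubset F tau -> subset S (bigunion F) ->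
    exists l : list set, (forall U, In U l -> F U) /\
      subset S (fun x => exists U, In U l /\ U x).

Definition noetherian (tau : family) : Prop :=
  forall S : set, compact_in tau S.

Definition generated (B : family) : family :=
  fun V => forall sigma, is_topology sigma -> fsubset B sigma -> sigma V.

Definition restrict (tau : family) (H : set) : family :=
  generated (fun W => exists U, tau U /\ (forall x, W x <-> (U x /\ H x))).

Definition refinement (R : family -> family) : Prop :=
  (forall tau, is_topology tau -> is_topology (R tau)) /\
  (forall tau tau', is_topology tau -> is_topology tau' ->
      fsubset tau tau' -> fsubset (R tau) (R tau')) /\
  (forall tau, is_topology tau -> noetherian tau -> noetherian (R tau)).

Definition topology_expander (R : family -> family) : Prop :=
  refinement R /\
  forall tau H, is_topology tau -> noetherian tau -> fsubset tau (R tau) ->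
    is_closed tau H ->
    feq (restrict (R tau) H) (restrict (R (restrict tau H)) H).

Definition is_lfp (R : family -> family) (tau : family) : Prop :=
  is_topology tau /\ feq (R tau) tau /\
  (forall sigma, is_topology sigma -> feq (R sigma) sigma -> fsubset tau sigma).

End Topo.

(* The least fixed point is the supremum of the tower of transfinite iterates of [R]
   from the indiscrete topology.  The tower is well ordered (Bourbaki-Witt), so let
   [th] be its least non-Noetherian member and pick a bad sequence of [th] (open sets
   [U n] containing [x n] but no later [x k]) that is minimal in Nash-Williams' sense:
   each [U n] appears as early in the tower as possible.  Then the stage [sg n] of
   [U n] lies below [R pi_n] for a Noetherian [pi_n] strictly below it.  Restricting
   [pi_n] to the closed set [T_n] of points avoiding the earlier [U i] of lower stage
   and joining these restrictions gives a topology [rho], Noetherian by minimality.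
   The expander law turns each [U n] into an open set of [R rho] with the same trace
   on [T_n], so [x] is a bad sequence of the Noetherian topology [R rho]. *)

From Stdlib Require Import List Classical IndefiniteDescription.
From Stdlib Require Import FunctionalExtensionality PropExtensionality Lia PeanoNat Wf_nat.

Section Topology.
Context {X : Type}.
Implicit Types (t : family X) (A B H W : set X).

Lemma set_ext A B : (forall x, A x <-> B x) -> A = B.
Proof.
  intro E; apply functional_extensionality; intro x.
  apply propositional_extensionality; auto.
Qed.

Lemma family_ext (F G : family X) : fsubset F G -> fsubset G F -> F = G.
Proof.
  intros FG GF; apply functional_extensionality; intro U.
  apply propositional_extensionality; split; auto.
Qed.

Lemma fsubset_trans {F G K : family X} : fsubset F G -> fsubset G K -> fsubset F K.
Proof. unfold fsubset; auto. Qed.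

Lemma open_ext t A B : t A -> (forall x, A x <-> B x) -> t B.
Proof. intros HA E; rewrite <- (set_ext A B E); exact HA. Qed.

Lemma open_setI t (U V : set X) : is_topology t -> t U -> t V -> t (setI U V).
Proof. intros [_ [HI _]]; auto. Qed.

Lemma open_bigunion t F : is_topology t -> fsubset F t -> t (bigunion F).
Proof. intros [_ [_ HU]]; auto. Qed.

Lemma generated_topology (F : family X) : is_topology (generated F).
Proof.
  split; [|split].
  - intros s [Ts _] _; exact Ts.
  - intros U V HU HV s Hs HF; apply open_setI; [exact Hs | apply HU | apply HV]; auto.
  - intros G HG s Hs HF; apply open_bigunion; auto; intros U HU; apply HG; auto.
Qed.

Lemma generated_incl (F : family X) : fsubset F (generated F).
Proof. intros U HU s _ HF; apply HF; exact HU. Qed.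

Lemma generated_min (F : family X) s : is_topology s -> fsubset F s -> fsubset (generated F) s.
Proof. intros Hs HF U HU; apply HU; auto. Qed.

Lemma noetherian_coarser t t' : fsubset t t' -> noetherian t' -> noetherian t.
Proof. intros tt' Hn S F HF; apply Hn; intros U HU; auto. Qed.

Definition locally (Bas : family X) W : Prop :=
  forall z, W z -> exists V, Bas V /\ V z /\ subset V W.

Definition basis_meet (Bas : family X) : Prop :=
  forall V V' z, Bas V -> Bas V' -> V z -> V' z ->
    exists V'', Bas V'' /\ V'' z /\ subset V'' (setI V V').

(* The whole space is added by hand: a basis need not cover [X]. *)
Lemma full_or_locally_topology Bas :
  basis_meet Bas -> is_topology (fun W => (forall z, W z) \/ locally Bas W).
Proof.
  intro Hmeet; split; [|split].
  - left; intro; exact I.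
  - intros U V [fU|lU] [fV|lV].
    + left; intro z; split; auto.
    + right; intros z [_ Vz]; destruct (lV z Vz) as [V0 [B0 [z0 sub0]]].
      exists V0; split; [|split]; auto; intros w w0; split; auto.
    + right; intros z [Uz _]; destruct (lU z Uz) as [V0 [B0 [z0 sub0]]].
      exists V0; split; [|split]; auto; intros w w0; split; auto.
    + right; intros z [Uz Vz].
      destruct (lU z Uz) as [V0 [B0 [z0 sub0]]], (lV z Vz) as [V1 [B1 [z1 sub1]]].
      destruct (Hmeet V0 V1 z B0 B1 z0 z1) as [V2 [B2 [z2 sub2]]].
      exists V2; split; [|split]; auto; intros w w2.
      destruct (sub2 w w2); split; auto.
  - intros G HG; destruct (classic (exists A, G A /\ forall z, A z)) as [[A [GA fA]]|Hnone].
    + left; intro z; exists A; auto.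
    + right; intros z [A [GA Az]].
      destruct (HG A GA) as [fA|lA]; [exfalso; eauto|].
      destruct (lA z Az) as [V [BV [Vz sub]]]; exists V; split; [|split]; auto.
      intros w Vw; exists A; auto.
Qed.

Lemma generated_full_or_locally (F Bas : family X) W :
  fsubset F Bas -> basis_meet Bas -> generated F W -> (forall z, W z) \/ locally Bas W.
Proof.
  intros FB Hmeet HW; refine (generated_min F _ (full_or_locally_topology Bas Hmeet) _ W HW).
  intros V FV; right; intros z Vz; exists V; repeat split; auto; intros w; auto.
Qed.

Definition sup (T : family X -> Prop) : family X :=
  generated (fun U => exists r, T r /\ r U).

Definition chain (T : family X -> Prop) : Prop :=
  forall a b, T a -> T b -> fsubset a b \/ fsubset b a.

Lemma sup_topology T : is_topology (sup T).
Proof. apply generated_topology. Qed.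

Lemma sup_ub {T r} : T r -> fsubset r (sup T).
Proof. intros Tr U rU; apply generated_incl; eauto. Qed.

Lemma sup_least T s : is_topology s -> (forall r, T r -> fsubset r s) -> fsubset (sup T) s.
Proof. intros Hs ub; apply generated_min; auto; intros U [r [Tr rU]]; eapply ub; eauto. Qed.

Lemma sup_chain_open T U :
  (forall r, T r -> is_topology r) -> chain T -> sup T U ->
  (forall z, U z) \/ locally (fun V => exists r, T r /\ r V) U.
Proof.
  intros Ttop Tchain; apply generated_full_or_locally; [intros V; auto|].
  intros V V' z [r [Tr rV]] [r' [Tr' rV']] Vz V'z; exists (setI V V').
  split; [|split; [split; auto | intros w; auto]].
  destruct (Tchain r r' Tr Tr') as [rr'|r'r].
  - exists r'; split; auto; apply open_setI; auto.
  - exists r; split; auto; apply open_setI; auto.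
Qed.

Lemma restrict_open (k : family X) H A : is_topology k -> restrict k H A ->
  (forall x, A x) \/ exists W, k W /\ forall x, A x <-> W x /\ H x.
Proof.
  intros Hk HA.
  set (Bas := fun V => exists W, k W /\ forall x, V x <-> W x /\ H x).
  assert (Hmeet : basis_meet Bas).
  { intros V V' z [W [kW EW]] [W' [kW' EW']] Vz V'z; exists (setI V V'); split.
    - exists (setI W W'); split; [apply open_setI; auto|].
      intro x; unfold setI; rewrite EW, EW'; tauto.
    - split; [split; auto | intros w; auto]. }
  destruct (generated_full_or_locally _ Bas A (fun V BV => BV) Hmeet HA) as [fA|lA];
    [left; exact fA|].
  right; exists (bigunion (fun W => k W /\ subset (fun x => W x /\ H x) A)); split.
  - apply open_bigunion; auto; intros W [kW _]; exact kW.
  - intro x; split.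
    + intro Ax; destruct (lA x Ax) as [V [[W [kW EW]] [Vx sub]]].
      apply EW in Vx; destruct Vx as [Wx Hx]; split; auto.
      exists W; repeat split; auto; intros y Hy; apply sub, EW; auto.
    + intros [[W [[kW sub] Wx]] Hx]; apply sub; auto.
Qed.

Definition bad_sequence t (x : nat -> X) (U : nat -> set X) : Prop :=
  forall n, t (U n) /\ U n (x n) /\ forall k, n < k -> ~ U n (x k).

Lemma bad_sequence_subseq t x U (h : nat -> nat) :
  bad_sequence t x U -> (forall i j, i < j -> h i < h j) ->
  bad_sequence t (fun i => x (h i)) (fun i => U (h i)).
Proof. intros B mono n; destruct (B (h n)) as [B1 [B2 B3]]; auto. Qed.

Lemma bad_sequence_shrink t x U n V :
  bad_sequence t x U -> t V -> V (x n) -> subset V (U n) ->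
  bad_sequence t x (fun i => if i =? n then V else U i).
Proof.
  intros B tV Vx VU i; destruct (Nat.eqb_spec i n) as [->|_]; [|apply B].
  split; [exact tV | split; [exact Vx |]].
  intros k nk Vxk; destruct (B n) as [_ [_ Bn]]; exact (Bn k nk (VU _ Vxk)).
Qed.

Lemma noetherian_no_bad_sequence t x U : noetherian t -> ~ bad_sequence t x U.
Proof.
  intros Hn B.
  destruct (Hn (fun z => exists n, z = x n) (fun V => exists n, V = U n)) as [l [Hl Hcov]].
  - intros V [n ->]; apply B.
  - intros z [n ->]; exists (U n); split; [exists n; auto | apply B].
  - assert (Hbound : exists N, forall V, In V l -> exists n, n < N /\ V = U n).
    { clear Hcov; induction l as [|V l IHl].
      - exists 0; intros V [].
      - destruct IHl as [N HN]; [intros V' HV'; apply Hl; right; auto|].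
        destruct (Hl V (or_introl eq_refl)) as [m ->].
        exists (S (max N m)); intros V' [<-|HV'].
        + exists m; split; auto; lia.
        + destruct (HN V' HV') as [n [Hn' ->]]; exists n; split; auto; lia. }
    destruct Hbound as [N HN].
    destruct (Hcov (x N) (ex_intro _ N eq_refl)) as [V [lV Vx]].
    destruct (HN V lV) as [n [nN ->]].
    destruct (B n) as [_ [_ B3]]; exact (B3 N nN Vx).
Qed.

Lemma no_bad_sequence_noetherian t :
  (forall x U, ~ bad_sequence t x U) -> noetherian t.
Proof.
  intros Hgood S; apply NNPP; intro Hnc.
  apply not_all_ex_not in Hnc as [F Hnc].
  apply imply_to_and in Hnc as [Ft Hnc].
  apply imply_to_and in Hnc as [SF Hnc].
  assert (Hfresh : forall l : list (set X), (forall U, In U l -> F U) ->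
            exists z U, (forall V, In V l -> ~ V z) /\ F U /\ U z).
  { intros l lF; apply NNPP; intro Hno; apply Hnc; exists l; split; auto.
    intros z Sz; apply NNPP; intro Hz; destruct (SF z Sz) as [U [FU Uz]].
    apply Hno; exists z, U; split; auto; intros V lV Vz; apply Hz; eauto. }
  destruct (Hfresh nil) as [z0 [U0 _]]; [intros _ []|].
  destruct (functional_choice (fun (l : list (set X)) (p : X * set X) =>
      (forall U, In U l -> F U) ->
      (forall V, In V l -> ~ V (fst p)) /\ F (snd p) /\ snd p (fst p))) as [next Hnext].
  { intro l; destruct (classic (forall U, In U l -> F U)) as [lF|lF].
    - destruct (Hfresh l lF) as [z [U HzU]]; exists (z, U); auto.
    - exists (z0, U0); intro; contradiction. }
  set (opens := fix opens n :=
         match n with 0 => nil | S n => snd (next (opens n)) :: opens n end).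
  assert (opensF : forall n U, In U (opens n) -> F U).
  { induction n as [|n IHn]; intros U HU; [destruct HU|].
    destruct HU as [<-|HU]; auto; apply (Hnext _ IHn). }
  assert (opens_in : forall n k, n < k -> In (snd (next (opens n))) (opens k)).
  { intros n k; induction k as [|k IHk]; intro nk; [lia|].
    destruct (Nat.eq_dec n k) as [->|nk']; [left; auto | right; apply IHk; lia]. }
  apply (Hgood (fun n => fst (next (opens n))) (fun n => snd (next (opens n)))).
  intro n; destruct (Hnext _ (opensF n)) as [_ [FU Uz]].
  split; [apply Ft, FU | split; [exact Uz |]].
  intros k nk; apply (Hnext _ (opensF k)), opens_in; exact nk.
Qed.

End Topology.

Lemma nat_least (P : nat -> Prop) n : P n -> exists p, P p /\ forall i, i < p -> ~ P i.
Proof.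
  induction n as [n IH] using (well_founded_induction lt_wf); intro Pn.
  destruct (classic (exists i, i < n /\ P i)) as [[i [lt Pi]]|Hno].
  - exact (IH i lt Pi).
  - exists n; split; auto; intros i lt Pi; apply Hno; eauto.
Qed.

Lemma nondecreasing_subsequence (f : nat -> nat) :
  exists idx : nat -> nat, (forall i j, i < j -> idx i < idx j) /\
    (forall i j, i <= j -> f (idx i) <= f (idx j)).
Proof.
  assert (min_from : forall a, exists k, a <= k /\ forall k', a <= k' -> f k <= f k').
  { intro a; destruct (nat_least (fun v => exists k, a <= k /\ f k = v) (f a))
      as [v [[k [ak <-]] vmin]]; [exists a; auto|].
    exists k; split; auto; intros k' ak'.
    destruct (Nat.lt_ge_cases (f k') (f k)) as [lt|]; auto.
    exfalso; apply (vmin (f k') lt); exists k'; auto. }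
  destruct (functional_choice _ min_from) as [am Ham].
  set (idx := fix idx j := match j with 0 => am 0 | S j => am (S (idx j)) end).
  assert (idx_succ : forall j, idx j < idx (S j)) by (intro j; apply (Ham (S (idx j)))).
  assert (idx_min : forall j k, idx j <= k -> f (idx j) <= f k).
  { intros [|j] k jk; simpl in *; apply Ham; [lia|].
    pose proof (proj1 (Ham (S (idx j)))); lia. }
  exists idx; split.
  - intros i j ij; induction ij; [apply idx_succ | specialize (idx_succ m); lia].
  - intros i j ij; apply idx_min; induction ij; auto; specialize (idx_succ m); lia.
Qed.

Definition strict {X : Type} (r s : family X) : Prop := fsubset r s /\ ~ fsubset s r.

Definition least_of {X : Type} (S : family X -> Prop) (m : family X) : Prop :=
  S m /\ forall s, S s -> fsubset m s.

Section Tower.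
Context {X : Type}.
Variable R : family X -> family X.
Hypothesis R_topology : forall tau, is_topology tau -> is_topology (R tau).
Hypothesis R_mono : forall tau tau', is_topology tau -> is_topology tau' ->
  fsubset tau tau' -> fsubset (R tau) (R tau').

(* Its least element is [sup] of the empty family, the indiscrete topology. *)
Inductive tower : family X -> Prop :=
| tower_sup T : (forall r, T r -> tower r) -> tower (sup T)
| tower_R r : tower r -> tower (R r).

Lemma tower_topology {r} : tower r -> is_topology r.
Proof. induction 1; [apply sup_topology | auto]. Qed.

Lemma tower_inflationary {r} : tower r -> fsubset r (R r).
Proof.
  induction 1 as [T HT IH | r Hr IH].
  - apply sup_least; [apply R_topology, sup_topology|].
    intros r Tr; apply (fsubset_trans (IH r Tr)), R_mono;
      [apply tower_topology; auto | apply sup_topology | apply sup_ub; exact Tr].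
  - apply R_mono; auto; apply tower_topology in Hr; auto.
Qed.

Lemma tower_below_prefixpoint {m r} :
  is_topology m -> fsubset (R m) m -> tower r -> fsubset r m.
Proof.
  intros Hm Rm; induction 1 as [T HT IH | r Hr IH].
  - apply sup_least; auto.
  - apply (fsubset_trans (R_mono _ _ (tower_topology Hr) Hm IH) Rm).
Qed.

(* The extreme points of the Bourbaki-Witt argument that the tower is a chain. *)
Definition extreme a : Prop := forall c, tower c -> strict c a -> fsubset (R c) a.
Definition separating a : Prop := forall b, tower b -> fsubset b a \/ fsubset (R a) b.

Lemma extreme_separating {a} : tower a -> extreme a -> separating a.
Proof.
  intros Ha Hext b; induction 1 as [T HT IH | c Hc IH].
  - destruct (classic (exists d, T d /\ fsubset (R a) d)) as [[d [Td Rad]]|Hno].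
    + right; exact (fsubset_trans Rad (sup_ub Td)).
    + left; apply sup_least; [apply tower_topology; auto|].
      intros d Td; destruct (IH d Td) as [da|Rad]; auto; exfalso; eauto.
  - destruct IH as [ca|Rac].
    + destruct (classic (fsubset a c)) as [ac|ac].
      * right; apply R_mono; auto; apply tower_topology; auto.
      * left; apply Hext; auto; split; auto.
    + right; exact (fsubset_trans Rac (tower_inflationary Hc)).
Qed.

Lemma tower_extreme {a} : tower a -> extreme a.
Proof.
  induction 1 as [T HT IH | e He IH].
  - intros c Hc [c_sup sup_c].
    assert (Hd : exists d, T d /\ ~ fsubset d c).
    { apply NNPP; intro Hno; apply sup_c, sup_least; [apply tower_topology; auto|].
      intros d Td; apply NNPP; intro; apply Hno; eauto. }
    destruct Hd as [d [Td dc]].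
    destruct (extreme_separating (HT d Td) (IH d Td) c Hc) as [cd|Rdc].
    + exact (fsubset_trans (IH d Td c Hc (conj cd dc)) (sup_ub Td)).
    + exfalso; exact (dc (fsubset_trans (tower_inflationary (HT d Td)) Rdc)).
  - intros c Hc [cRe Rec].
    destruct (extreme_separating He IH c Hc) as [ce|Rec'].
    + apply R_mono; auto; apply tower_topology; auto.
    + contradiction.
Qed.

Lemma tower_chain : chain tower.
Proof.
  intros a b Ha Hb.
  destruct (extreme_separating Ha (tower_extreme Ha) b Hb) as [ba|Rab]; auto.
  left; exact (fsubset_trans (tower_inflationary Ha) Rab).
Qed.

(* The tower is well ordered; stated for the upward closed subsets, which is all we need. *)
Lemma tower_least (S : family X -> Prop) :
  (exists s, S s) -> (forall s, S s -> tower s) ->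
  (forall s s', tower s' -> S s -> fsubset s s' -> S s') ->
  exists m, tower m /\ least_of S m.
Proof.
  intros [s0 Ss0] S_tower S_up.
  set (m := sup (fun r => tower r /\ forall s, S s -> fsubset r s)).
  assert (Hm : tower m) by (apply tower_sup; intros r [Hr _]; exact Hr).
  assert (m_lower : forall s, S s -> fsubset m s).
  { intros s Ss; apply sup_least; [apply tower_topology; auto|]; intros r [_ Hr]; auto. }
  exists m; split; auto; split; auto.
  apply NNPP; intro Sm.
  assert (Rm : fsubset (R m) m).
  { apply sup_ub; split; [apply tower_R; exact Hm|].
    intros s Ss; destruct (extreme_separating Hm (tower_extreme Hm) s (S_tower s Ss))
      as [sm|Rms]; auto.
    exfalso; apply Sm; exact (S_up s m Hm Ss sm). }
  apply Sm, (S_up s0 m Hm Ss0), (tower_below_prefixpoint (tower_topology Hm) Rm).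
  apply S_tower; exact Ss0.
Qed.

Lemma sup_tower_tower : tower (sup tower).
Proof. apply tower_sup; auto. Qed.

Lemma sup_tower_fixed : feq (R (sup tower)) (sup tower).
Proof.
  split; [apply sup_ub, tower_R, sup_tower_tower | apply tower_inflationary, sup_tower_tower].
Qed.

Lemma sup_tower_lfp : is_lfp R (sup tower).
Proof.
  split; [apply sup_topology | split; [exact sup_tower_fixed |]].
  intros sigma Hsigma [R_sigma _].
  exact (tower_below_prefixpoint Hsigma R_sigma sup_tower_tower).
Qed.

End Tower.

Section MinimalBadSequence.
Context {X : Type}.
Implicit Types (x y z : nat -> X) (U V W : nat -> set X).

Definition agree n x y U V : Prop := forall i, i < n -> y i = x i /\ V i = U i.

Lemma agree_refl n x U : agree n x x U U.
Proof. intros i _; auto. Qed.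

Lemma agree_sym {n x y U V} : agree n x y U V -> agree n y x V U.
Proof. intros a i lt; destruct (a i lt); auto. Qed.

Lemma agree_trans {n x y z U V W} : agree n x y U V -> agree n y z V W -> agree n x z U W.
Proof. intros a b i lt; destruct (a i lt), (b i lt); split; congruence. Qed.

Lemma agree_weak {m n x y U V} : m <= n -> agree n x y U V -> agree m x y U V.
Proof. intros mn a i lt; apply a; lia. Qed.

Variable R : family X -> family X.
Hypothesis R_topology : forall tau, is_topology tau -> is_topology (R tau).
Hypothesis R_mono : forall tau tau', is_topology tau -> is_topology tau' ->
  fsubset tau tau' -> fsubset (R tau) (R tau').
Variable th : family X.

Definition stages n x U : family X -> Prop :=
  fun s => tower R s /\
    exists y V, bad_sequence th y V /\ agree n x y U V /\ s (V n).

Lemma stages_agree {n x x' U U' s} :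
  agree n x x' U U' -> stages n x U s -> stages n x' U' s.
Proof.
  intros a [Hs [y [V [B [b HV]]]]]; split; auto.
  exists y, V; split; [exact B | split; [exact (agree_trans (agree_sym a) b) | exact HV]].
Qed.

Lemma minimal_step n x U : tower R th -> bad_sequence th x U ->
  exists y V, bad_sequence th y V /\ agree n x y U V /\
    exists m, least_of (stages n x U) m /\ m (V n).
Proof.
  intros Hth B.
  destruct (tower_least R R_topology R_mono (stages n x U)) as [m [_ [Sm m_least]]].
  - exists th; split; auto; exists x, U; split; [exact B | split; [apply agree_refl | apply B]].
  - intros s [Hs _]; exact Hs.
  - intros s s' Hs' [_ [y [V [B' [a Vs]]]]] ss'; split; auto; exists y, V; auto.
  - pose proof Sm as [_ [y [V [B' [a Vm]]]]].
    exists y, V; split; [exact B' | split; [exact a |]].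
    exists m; split; [split |]; auto.
Qed.

(* Nash-Williams' minimal bad sequence, with the tower as the measure. *)
Lemma minimal_bad_sequence x0 U0 : tower R th -> bad_sequence th x0 U0 ->
  exists x U (sg : nat -> family X), bad_sequence th x U /\
    forall n, least_of (stages n x U) (sg n) /\ sg n (U n).
Proof.
  intros Hth B0.
  pose (improves n (p p' : (nat -> X) * (nat -> set X)) :=
          bad_sequence th (fst p') (snd p') /\ agree n (fst p) (fst p') (snd p) (snd p') /\
          exists m, least_of (stages n (fst p) (snd p)) m /\ m (snd p' n)).
  destruct (functional_choice (fun (np : nat * ((nat -> X) * (nat -> set X))) p' =>
              bad_sequence th (fst (snd np)) (snd (snd np)) -> improves (fst np) (snd np) p'))
    as [step Hstep].
  { intros [n [x U]]; destruct (classic (bad_sequence th x U)) as [B|nB].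
    - destruct (minimal_step n x U Hth B) as [y [V HyV]]; exists (y, V); auto.
    - exists (x, U); simpl; intro; contradiction. }
  set (it := fix it k := match k with 0 => (x0, U0) | S k => step (k, it k) end).
  assert (it_improves : forall k, improves k (it k) (it (S k))).
  { intro k; apply (Hstep (k, it k)); induction k as [|k IHk]; [exact B0|].
    apply (Hstep (k, it k)); exact IHk. }
  assert (it_agree : forall k k', k <= k' ->
            agree k (fst (it k)) (fst (it k')) (snd (it k)) (snd (it k'))).
  { induction 1 as [|k' kk' IHk]; [apply agree_refl|].
    apply (agree_trans IHk), (agree_weak kk'), it_improves. }
  set (x := fun i => fst (it (S i)) i); set (U := fun i => snd (it (S i)) i).
  assert (it_limit : forall k, agree k (fst (it k)) x (snd (it k)) U).
  { intros k i ik; destruct (it_agree (S i) k ik i (Nat.lt_succ_diag_r i)); auto. }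
  assert (B : bad_sequence th x U).
  { intro n; destruct (it_improves n) as [Bn _], (Bn n) as [B1 [B2 B3]].
    split; [exact B1 | split; [exact B2|]]; intros k nk.
    destruct (it_limit (S k) n) as [_ ->]; [lia|].
    destruct (proj1 (it_improves k) n) as [_ [_ Hk]]; exact (Hk k nk). }
  destruct (functional_choice (fun n m => least_of (stages n x U) m /\ m (U n))) as [sg Hsg].
  { intro n; destruct (it_improves n) as [_ [_ [m [[Sm m_least] Um]]]]; exists m.
    split; [split|]; auto.
    - exact (stages_agree (it_limit n) Sm).
    - intros s Ss; apply m_least, (stages_agree (agree_sym (it_limit n)) Ss). }
  exists x, U, sg; auto.
Qed.

End MinimalBadSequence.

Section MinimalBadSequenceAbsurd.
Context {X : Type}.
Variable R : family X -> family X.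
Hypothesis R_expander : topology_expander R.
Variable th : family X.
Hypothesis th_tower : tower R th.
Hypothesis below_noetherian : forall p, tower R p -> strict p th -> noetherian p.
Variables (x : nat -> X) (U : nat -> set X) (sg : nat -> family X).
Hypothesis x_U_bad : bad_sequence th x U.
Hypothesis sg_least : forall n, least_of (stages R th n x U) (sg n) /\ sg n (U n).

Let R_refinement : refinement R := proj1 R_expander.
Let R_topology : forall tau, is_topology tau -> is_topology (R tau) :=
  proj1 R_refinement.
Let R_mono := proj1 (proj2 R_refinement).
Let tower_open {r} (Hr : tower R r) : is_topology r := tower_topology R R_topology Hr.

Lemma stage_tower n : tower R (sg n).
Proof. exact (proj1 (proj1 (proj1 (sg_least n)))). Qed.

Lemma stage_below n s : stages R th n x U s -> fsubset (sg n) s.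
Proof. exact (proj2 (proj1 (sg_least n)) s). Qed.

Lemma stage_sub n : fsubset (sg n) th.
Proof.
  apply stage_below; split; [exact th_tower|].
  exists x, U; split; [exact x_U_bad | split; [apply agree_refl | apply x_U_bad]].
Qed.

Lemma stage_mono {n m} : n <= m -> fsubset (sg n) (sg m).
Proof.
  intro nm; apply stage_below; split; [apply stage_tower|].
  set (h := fun i => if i <? n then i else i + (m - n)).
  exists (fun i => x (h i)), (fun i => U (h i)); split; [|split].
  - apply bad_sequence_subseq; [exact x_U_bad|]; intros i j ij; unfold h.
    destruct (Nat.ltb_spec i n), (Nat.ltb_spec j n); lia.
  - intros i i_n; unfold h; destruct (Nat.ltb_spec i n); [auto | lia].
  - unfold h; destruct (Nat.ltb_spec n n); [lia|].
    replace (n + (m - n)) with m by lia; apply sg_least.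
Qed.

Definition prestage n : family X := sup (fun r => tower R r /\ strict r (sg n)).

Lemma prestage_tower n : tower R (prestage n).
Proof. apply tower_sup; intros r [Hr _]; exact Hr. Qed.

Lemma prestage_sub n : fsubset (prestage n) (sg n).
Proof. apply sup_least; [apply tower_open, stage_tower|]; intros r [_ [r_sg _]]; exact r_sg. Qed.

(* An open set of a supremum of a chain is locally open at a lower stage, so
   [U n] could be shrunk to an open set of a stage below [sg n]. *)
Lemma prestage_strict n : strict (prestage n) (sg n).
Proof.
  split; [apply prestage_sub | intro sg_pre].
  destruct (x_U_bad n) as [_ [Uxn Ufresh]].
  destruct (sup_chain_open _ _ (fun r Hr => tower_open (proj1 Hr))
              (fun a b Ha Hb => tower_chain R R_topology R_mono a b (proj1 Ha) (proj1 Hb))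
              (sg_pre _ (proj2 (sg_least n)))) as [Ufull | Ulocal].
  - exact (Ufresh (S n) (Nat.lt_succ_diag_r n) (Ufull _)).
  - destruct (Ulocal (x n) Uxn) as [V [[r [[Hr [r_sg sg_r]] rV]] [Vx VU]]].
    apply sg_r, stage_below; split; [exact Hr|].
    exists x, (fun i => if i =? n then V else U i); split; [|split].
    + apply bad_sequence_shrink; auto; apply (stage_sub n), r_sg, rV.
    + intros i i_n; destruct (Nat.eqb_spec i n); [lia | auto].
    + rewrite Nat.eqb_refl; exact rV.
Qed.

Lemma stage_sub_R_prestage n : fsubset (sg n) (R (prestage n)).
Proof.
  destruct (tower_chain R R_topology R_mono _ _ (stage_tower n) (tower_R R _ (prestage_tower n)))
    as [sg_R|R_sg]; auto.
  apply NNPP; intro not_sg_R; apply (proj2 (prestage_strict n)).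
  assert (R_pre : fsubset (R (prestage n)) (prestage n)).
  { apply sup_ub; split; [apply tower_R, prestage_tower | split; auto]. }
  exact (tower_below_prefixpoint R R_topology R_mono (tower_open (prestage_tower n)) R_pre (stage_tower n)).
Qed.

Lemma prestage_noetherian n : noetherian (prestage n).
Proof.
  apply below_noetherian; [apply prestage_tower | split].
  - exact (fsubset_trans (prestage_sub n) (stage_sub n)).
  - intro th_pre; apply (proj2 (prestage_strict n)).
    exact (fsubset_trans (stage_sub n) th_pre).
Qed.

Lemma prestage_mono n m : n <= m -> fsubset (prestage n) (prestage m).
Proof.
  intro nm; apply sup_least; [apply tower_open, prestage_tower|].
  intros r [Hr [r_sg sg_r]]; apply sup_ub; split; [exact Hr | split].
  - exact (fsubset_trans r_sg (stage_mono nm)).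
  - intro sgm_r; exact (sg_r (fsubset_trans (stage_mono nm) sgm_r)).
Qed.

Lemma earlier_stage_sub_prestage i n :
  i <= n -> sg i <> sg n -> fsubset (sg i) (prestage n).
Proof.
  intros i_n sg_ne; apply sup_ub; split; [apply stage_tower | split; [apply stage_mono; auto|]].
  intro sgn_i; apply sg_ne, family_ext; [apply stage_mono; auto | exact sgn_i].
Qed.

Definition outside n (z : X) : Prop := forall i, i < n -> sg i <> sg n -> ~ U i z.

Lemma outside_closed n : is_closed (prestage n) (outside n).
Proof.
  unfold is_closed; apply (open_ext _ (bigunion (fun V => exists i, i < n /\ sg i <> sg n /\ V = U i))).
  - apply open_bigunion; [apply tower_open, prestage_tower|].
    intros V [i [i_n [sg_ne ->]]].
    apply (earlier_stage_sub_prestage i n); [lia | exact sg_ne | apply sg_least].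
  - intro z; split.
    + intros [V [[i [i_n [sg_ne ->]]] Uz]] out; exact (out i i_n sg_ne Uz).
    + intro not_out; apply NNPP; intro Hno; apply not_out; intros i i_n sg_ne Uz.
      apply Hno; exists (U i); split; [exists i; auto | exact Uz].
Qed.

Lemma outside_anti n m z : n <= m -> outside m z -> outside n z.
Proof.
  intros nm out i i_n sg_ne; apply out; [lia|]; intro sg_eq; apply sg_ne.
  apply family_ext; [apply stage_mono; lia|].
  rewrite sg_eq; apply stage_mono; exact nm.
Qed.

Lemma outside_tail n k : n <= k -> outside n (x k).
Proof. intros nk i i_n _; destruct (x_U_bad i) as [_ [_ fresh]]; apply fresh; lia. Qed.

Definition glued_basis : family X :=
  fun W => exists n V, prestage n V /\ forall z, W z <-> V z /\ outside n z.

Definition glued : family X := generated glued_basis.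

Lemma glued_basis_meet : basis_meet glued_basis.
Proof.
  intros W W' z [n [V [HV EW]]] [n' [V' [HV' EW']]] Wz W'z.
  exists (setI W W'); split; [|split; [split; auto | intros w; auto]].
  exists (max n n'), (setI V V'); split.
  - apply open_setI; [apply tower_open, prestage_tower | |].
    + apply (prestage_mono n); [lia | exact HV].
    + apply (prestage_mono n'); [lia | exact HV'].
  - intro w; unfold setI; rewrite EW, EW'; split.
    + intros [[Vw ow] [V'w o'w]]; split; [split; auto|].
      destruct (Nat.max_spec n n') as [[_ ->]|[_ ->]]; auto.
    + intros [[Vw V'w] ow]; split; split; auto.
      * exact (outside_anti _ _ _ (Nat.le_max_l n n') ow).
      * exact (outside_anti _ _ _ (Nat.le_max_r n n') ow).
Qed.

(* A bad sequence of [glued] splices into [(x, U)] at the first index [p] of stage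
   [sg m], with an open set of the lower stage [prestage p] at position [p]. *)
Lemma glued_bad_absurd m (y : nat -> X) (V : nat -> set X) :
  (forall j, th (V j) /\ V j (y j) /\ outside m (y j) /\ forall k, j < k -> ~ V j (y k)) ->
  prestage m (V 0) -> False.
Proof.
  intros HyV pre_V0.
  destruct (nat_least (fun i => sg i = sg m) m eq_refl) as [p [sg_p p_least]].
  assert (p_m : p <= m).
  { destruct (Nat.le_gt_cases p m) as [|mp]; [auto | exfalso; exact (p_least m mp eq_refl)]. }
  set (y' := fun i => if i <? p then x i else y (i - p)).
  set (V' := fun i => if i <? p then U i else V (i - p)).
  apply (proj2 (prestage_strict p)), stage_below; split; [apply prestage_tower|].
  exists y', V'; split; [|split].
  - intro i; unfold y', V'; destruct (Nat.ltb_spec i p) as [ip|ip].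
    + destruct (x_U_bad i) as [B1 [B2 B3]]; split; [exact B1 | split; [exact B2 |]].
      intros k ik; destruct (Nat.ltb_spec k p); [apply B3; exact ik|].
      destruct (HyV (k - p)) as [_ [_ [out _]]]; apply out; [lia|].
      intro sg_eq; exact (p_least i ip sg_eq).
    + destruct (HyV (i - p)) as [B1 [B2 [_ B3]]]; split; [exact B1 | split; [exact B2 |]].
      intros k ik; destruct (Nat.ltb_spec k p); [lia|]; apply B3; lia.
  - intros i ip; unfold y', V'; destruct (Nat.ltb_spec i p); [auto | lia].
  - unfold V'; destruct (Nat.ltb_spec p p); [lia|]; rewrite Nat.sub_diag.
    unfold prestage; rewrite sg_p; exact pre_V0.
Qed.

Lemma glued_noetherian : noetherian glued.
Proof.
  apply no_bad_sequence_noetherian; intros y Z BZ.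
  destruct (functional_choice (fun k (nV : nat * set X) =>
      prestage (fst nV) (snd nV) /\ snd nV (y k) /\ outside (fst nV) (y k) /\
      forall w, snd nV w -> outside (fst nV) w -> Z k w)) as [lv Hlv].
  { intro k; destruct (BZ k) as [Zopen [Zy Zfresh]].
    destruct (generated_full_or_locally _ _ _ (fun _ h => h) glued_basis_meet Zopen)
      as [Zfull | Zlocal].
    - exfalso; exact (Zfresh (S k) (Nat.lt_succ_diag_r k) (Zfull _)).
    - destruct (Zlocal (y k) Zy) as [W [[n [V [HV EW]]] [Wy WZ]]].
      exists (n, V); apply EW in Wy as [Vy oy].
      split; [exact HV | split; [exact Vy | split; [exact oy |]]].
      intros w Vw ow; apply WZ, EW; split; auto. }
  destruct (nondecreasing_subsequence (fun k => fst (lv k))) as [idx [idx_mono lev_mono]].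
  apply (glued_bad_absurd (fst (lv (idx 0))) (fun j => y (idx j)) (fun j => snd (lv (idx j)))).
  - intro j; destruct (Hlv (idx j)) as [HV [Vy [oy VZ]]].
    split; [apply (stage_sub (fst (lv (idx j)))), prestage_sub, HV | split; [exact Vy | split]].
    + exact (outside_anti _ _ _ (lev_mono 0 j (Nat.le_0_l j)) oy).
    + intros k jk Vyk; destruct (BZ (idx j)) as [_ [_ Zfresh]].
      apply (Zfresh (idx k) (idx_mono j k jk)), VZ; [exact Vyk|].
      destruct (Hlv (idx k)) as [_ [_ [oyk _]]].
      exact (outside_anti _ _ _ (lev_mono j k (Nat.lt_le_incl _ _ jk)) oyk).
  - apply (Hlv (idx 0)).
Qed.

(* This is where the expander law enters. *)
Lemma R_glued_trace n : exists W, R glued W /\ forall z, outside n z -> (W z <-> U n z).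
Proof.
  pose proof (tower_open (prestage_tower n)) as pre_top.
  destruct (proj2 R_expander (prestage n) (outside n) pre_top (prestage_noetherian n)
              (tower_inflationary R R_topology R_mono (prestage_tower n)) (outside_closed n))
    as [to_restrict _].
  assert (HA : restrict (R (prestage n)) (outside n) (fun z => U n z /\ outside n z)).
  { apply generated_incl; exists (U n); split; [apply stage_sub_R_prestage, sg_least | tauto]. }
  destruct (restrict_open _ _ _ (R_topology _ (generated_topology _)) (to_restrict _ HA))
    as [Afull | [W [HW EW]]].
  - destruct (Afull (x (S n))) as [Ux _], (x_U_bad n) as [_ [_ fresh]].
    exfalso; exact (fresh (S n) (Nat.lt_succ_diag_r n) Ux).
  - exists W; split.
    + revert HW; apply R_mono; [apply generated_topology | apply generated_topology |].
      apply generated_min; [apply generated_topology|]; intros V [V0 [HV0 EV]].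
      apply generated_incl; exists n, V0; auto.
    + intros z oz; specialize (EW z); tauto.
Qed.

Lemma minimal_bad_sequence_absurd : False.
Proof.
  destruct (functional_choice (fun n W => R glued W /\ forall z, outside n z -> (W z <-> U n z)))
    as [W HW]; [exact R_glued_trace|].
  apply (noetherian_no_bad_sequence _ x W
           (proj2 (proj2 R_refinement) _ (generated_topology _) glued_noetherian)).
  intro n; destruct (HW n) as [RW EW]; split; [exact RW | split].
  - apply EW; [apply outside_tail; auto | apply x_U_bad].
  - intros k nk Wx; apply EW in Wx; [|apply outside_tail; lia].
    destruct (x_U_bad n) as [_ [_ fresh]]; exact (fresh k nk Wx).
Qed.

End MinimalBadSequenceAbsurd.

Lemma tower_noetherian {X : Type} (R : family X -> family X) th :
  topology_expander R -> tower R th -> noetherian th.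
Proof.
  intros HE Hth; apply NNPP; intro th_not.
  pose proof (proj1 (proj1 HE)) as R_topology.
  pose proof (proj1 (proj2 (proj1 HE))) as R_mono.
  destruct (tower_least R R_topology R_mono (fun s => tower R s /\ ~ noetherian s))
    as [th' [Hth' [[_ th'_not] th'_least]]].
  - exists th; auto.
  - intros s [Hs _]; exact Hs.
  - intros s s' Hs' [_ s_not] ss'; split; [exact Hs'|].
    intro Hn; exact (s_not (noetherian_coarser _ _ ss' Hn)).
  - assert (below : forall p, tower R p -> strict p th' -> noetherian p).
    { intros p Hp [_ th_p]; apply NNPP; intro p_not; exact (th_p (th'_least p (conj Hp p_not))). }
    assert (Hbad : exists x U, bad_sequence th' x U).
    { apply NNPP; intro Hno; apply th'_not, no_bad_sequence_noetherian.
      intros x U B; apply Hno; eauto. }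
    destruct Hbad as [x0 [U0 B0]].
    destruct (minimal_bad_sequence R R_topology R_mono th' x0 U0 Hth' B0) as [x [U [sg [B Hsg]]]].
    exact (minimal_bad_sequence_absurd R HE th' Hth' below x U sg B Hsg).
Qed.

Theorem mainTheorem1 (X : Type) (R : family X -> family X) :
  topology_expander R ->
  (exists tau : family X, is_lfp R tau) /\
  (forall tau : family X, is_lfp R tau -> noetherian tau).
Proof.
  intros HE.
  pose proof (proj1 (proj1 HE)) as R_topology.
  pose proof (proj1 (proj2 (proj1 HE))) as R_mono.
  split; [exists (sup (tower R)); exact (sup_tower_lfp R R_topology R_mono)|].
  intros tau [_ [_ tau_least]].
  apply (noetherian_coarser _ _ (tau_least _ (sup_topology _) (sup_tower_fixed R R_topology R_mono))).
  exact (tower_noetherian R _ HE (sup_tower_tower R)).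
Qed.
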